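(* For each $y\in\mathbb Y$ such that the Riccati equations with parameter $y$ have a global solution $(\Phi_y,\Psi_y)$, the Volterra integral operator $$\mathcal I_y:C(\mathbb R_+)\to\{h\in C^1(\mathbb R_+):h(0)=0\},\qquad \mathcal I_y(\theta)(\tau)=\int_0^\tau\theta(s)\langle\Psi_y'(\tau-s),e_1\rangle ds,$$ is well defined and bijective.
   Context: $d\ge1$, $e_1$ the first canonical basis vector of $\mathbb R^d$, $\langle\cdot,\cdot\rangle$ the Euclidean inner product. For a parameter $y$ there are symmetric positive semidefinite $a_y,\alpha_y^1,\dots,\alpha_y^d\in\mathbb R^{d\times d}$ and $b_y,\beta_y^1,\dots,\beta_y^d\in\mathbb R^d$. Fix $\lambda\in\mathbb R^d$ with $\langle\lambda,e_1\rangle\ne0$. With $F_y(u)=\tfrac12\langle u,a_yu\rangle+\langle u,b_y\rangle$ and $R_y^i(u)=\tfrac12\langle u,\alpha_y^iu\rangle+\langle u,\beta_y^i\rangle$, the Riccati equations are $\Phi_y'=F_y\circ\Psi_y$, $\Phi_y(0)=0$, $\Psi_y'=R_y\circ\Psi_y-\lambda$, $\Psi_y(0)=0$, with $\Phi_y\in C^\infty(\mathbb R_+)$, $\Psi_y\in C^\infty(\mathbb R_+;\mathbb R^d)$. *)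

From Stdlib Require Import Reals Lra ClassicalEpsilon.
Open Scope R_scope.

(* Vectors of R^d are functions nat -> R (only indices i < d matter);
   d x d matrices are functions nat -> nat -> R. *)

Fixpoint rsum (n : nat) (f : nat -> R) : R :=
  match n with O => 0 | S k => rsum k f + f k end.

Definition dot (d : nat) (u v : nat -> R) : R := rsum d (fun i => u i * v i).

Definition matvec (d : nat) (m : nat -> nat -> R) (u : nat -> R) : nat -> R :=
  fun i => rsum d (fun j => m i j * u j).

Definition e1 : nat -> R := fun i => match i with O => 1 | _ => 0 end.

Definition symmetric_psd (d : nat) (m : nat -> nat -> R) : Prop :=
  (forall i j, (i < d)%nat -> (j < d)%nat -> m i j = m j i) /\
  (forall u : nat -> R, 0 <= dot d u (matvec d m u)).

Definition quadf (d : nat) (a : nat -> nat -> R) (b : nat -> R) (u : nat -> R) : R :=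
  / 2 * dot d u (matvec d a u) + dot d u b.

Definition cont_Rplus (f : R -> R) : Prop :=
  forall t, 0 <= t -> forall eps, 0 < eps -> exists delta, 0 < delta /\
    forall s, 0 <= s -> Rabs (s - t) < delta -> Rabs (f s - f t) < eps.

Definition deriv_Rplus (f f' : R -> R) : Prop :=
  forall t, 0 <= t -> forall eps, 0 < eps -> exists delta, 0 < delta /\
    forall h, h <> 0 -> Rabs h < delta -> 0 <= t + h ->
      Rabs ((f (t + h) - f t) / h - f' t) < eps.

Definition C1_Rplus (f : R -> R) : Prop :=
  exists f', deriv_Rplus f f' /\ cont_Rplus f'.

Definition Cinf_Rplus (f : R -> R) : Prop :=
  exists D : nat -> R -> R, (forall t, 0 <= t -> D O t = f t) /\
    forall k, deriv_Rplus (D k) (D (S k)).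

(* Riemann integral as a total function: the value of the Riemann integral
   of f over [a,b] when f is Riemann integrable there (0 otherwise). *)
Definition RInt (f : R -> R) (a b : R) : R :=
  epsilon (inhabits 0) (fun v => exists pr : Riemann_integrable f a b, RiemannInt pr = v).

(* Volterra operator I(theta)(tau) = int_0^tau theta(s) <Psi'(tau - s), e1> ds,
   where dPsi1 = <Psi', e1>. *)
Definition volterra (dPsi1 theta : R -> R) (tau : R) : R :=
  RInt (fun s => theta s * dPsi1 (tau - s)) 0 tau.

From Pilot Require Import Defs.
From Stdlib Require Import Reals Lra Lia ClassicalEpsilon.
From Coquelicot Require Import Coquelicot.
Open Scope R_scope.

(* With k := <Psi', e1>, the Riccati equation and Psi(0) = 0 give k(0) = -<lambda, e1> <> 0, and k is
   smooth on R_+.  Differentiating I(theta)(tau) = int_0^tau theta(s) k(tau - s) ds gives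
   I(theta)' = k(0) theta + int_0^tau theta(s) k'(tau - s) ds, so I(theta) = h with h(0) = 0 is
   equivalent to the Volterra equation of the second kind
     theta = h' / k(0) - (1 / k(0)) int_0^tau theta(s) k'(tau - s) ds.
   Its solutions are unique and exist: iterating |u| <= L int_0^t |u| gives |u| <= A (L t)^n / n!,
   which forces u = 0 (Gronwall) and makes the Picard iterates converge uniformly on compacts. *)

Lemma dot_e1 d v : (1 <= d)%nat -> dot d v e1 = v O.
Proof.
  unfold dot; induction d as [|[|d] IH]; intros Hd; simpl in *; [lia|ring|].
  rewrite IH by lia; ring.
Qed.

Lemma quadf_eq0 d a b u : (forall i, (i < d)%nat -> u i = 0) -> quadf d a b u = 0.
Proof.
  intros Hu; unfold quadf, dot.
  assert (Hsum : forall f n, (n <= d)%nat -> rsum n (fun i => u i * f i) = 0).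
  { intros f n; induction n as [|n IH]; intros Hn; simpl; [reflexivity|].
    rewrite IH, Hu by lia; ring. }
  rewrite !Hsum by lia; ring.
Qed.

Lemma deriv_Rplus_cont_Rplus f f' : deriv_Rplus f f' -> cont_Rplus f.
Proof.
  intros H t Ht eps Heps.
  destruct (H t Ht 1 Rlt_0_1) as [del [Hdel Hd]].
  set (B := Rabs (f' t) + 1).
  assert (HB : 0 < B) by (pose proof (Rabs_pos (f' t)); unfold B; lra).
  exists (Rmin del (eps / B)); split.
  { apply Rmin_pos; [lra | apply Rdiv_lt_0_compat; lra]. }
  intros s Hs Hst.
  destruct (Req_dec s t) as [->|Hne]; [rewrite Rminus_diag, Rabs_R0; lra|].
  pose proof (Rmin_l del (eps / B)); pose proof (Rmin_r del (eps / B)).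
  specialize (Hd (s - t) ltac:(lra) ltac:(lra) ltac:(lra)).
  replace (t + (s - t)) with s in Hd by ring.
  assert (Hq : Rabs ((f s - f t) / (s - t)) < B).
  { pose proof (Rabs_triang ((f s - f t) / (s - t) - f' t) (f' t)) as Htr.
    replace ((f s - f t) / (s - t) - f' t + f' t) with ((f s - f t) / (s - t)) in Htr by ring.
    unfold B; lra. }
  replace (f s - f t) with ((s - t) * ((f s - f t) / (s - t))) by (field; lra).
  rewrite Rabs_mult.
  apply Rle_lt_trans with (Rabs (s - t) * B); [apply Rmult_le_compat_l; [apply Rabs_pos | lra]|].
  apply Rlt_le_trans with (eps / B * B); [apply Rmult_lt_compat_r; lra | right; field; lra].
Qed.

Lemma deriv_Rplus_unique f f1 g g1 : deriv_Rplus f f1 -> deriv_Rplus g g1 ->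
  (forall t, 0 <= t -> f t = g t) -> forall t, 0 <= t -> f1 t = g1 t.
Proof.
  intros Hf Hg Heq t Ht.
  destruct (Req_dec (f1 t) (g1 t)) as [E|Hne]; [exact E | exfalso].
  set (e := Rabs (f1 t - g1 t) / 2).
  assert (He : 0 < e) by (unfold e; pose proof (Rabs_pos_lt (f1 t - g1 t)); lra).
  destruct (Hf t Ht e He) as [d1 [Hd1 H1]], (Hg t Ht e He) as [d2 [Hd2 H2]].
  set (h := Rmin d1 d2 / 2).
  pose proof (Rmin_l d1 d2); pose proof (Rmin_r d1 d2); pose proof (Rmin_pos d1 d2 Hd1 Hd2).
  assert (Habs : Rabs h = h) by (apply Rabs_right; unfold h; lra).
  specialize (H1 h ltac:(unfold h; lra) ltac:(rewrite Habs; unfold h; lra) ltac:(unfold h; lra)).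
  specialize (H2 h ltac:(unfold h; lra) ltac:(rewrite Habs; unfold h; lra) ltac:(unfold h; lra)).
  rewrite (Heq (t + h)), (Heq t) in H1 by (unfold h; lra).
  pose proof (Rabs_triang ((g (t + h) - g t) / h - g1 t) (- ((g (t + h) - g t) / h - f1 t))) as Htr.
  rewrite Rabs_Ropp in Htr.
  replace ((g (t + h) - g t) / h - g1 t + - ((g (t + h) - g t) / h - f1 t))
    with (f1 t - g1 t) in Htr by ring.
  unfold e in *; lra.
Qed.

Lemma deriv_Rplus_ext f f' g g' : deriv_Rplus f f' ->
  (forall t, 0 <= t -> f t = g t) -> (forall t, 0 <= t -> f' t = g' t) -> deriv_Rplus g g'.
Proof.
  intros H E E' t Ht eps Heps; destruct (H t Ht eps Heps) as [del [Hd Hh]].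
  exists del; split; [exact Hd|]; intros h H1 H2 H3; rewrite <- !E, <- E' by lra; auto.
Qed.

Lemma deriv_Rplus_zero : deriv_Rplus (fun _ => 0) (fun _ => 0).
Proof.
  intros t _ eps Heps; exists 1; split; [lra|]; intros h Hh _ _.
  replace ((0 - 0) / h - 0) with 0 by (field; auto); rewrite Rabs_R0; exact Heps.
Qed.

Lemma is_derive_deriv_Rplus f f' : (forall t, is_derive f t (f' t)) -> deriv_Rplus f f'.
Proof.
  intros H t _ eps Heps; destruct (proj1 (is_derive_Reals _ _ _) (H t) eps Heps) as [del Hd].
  exists del; split; [apply cond_pos|]; intros h Hh Hha _; auto.
Qed.

Lemma deriv_Rplus_is_derive f f' x : deriv_Rplus f f' -> 0 < x -> is_derive f x (f' x).
Proof.
  intros H Hx; apply is_derive_Reals; intros eps Heps.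
  destruct (H x (Rlt_le _ _ Hx) eps Heps) as [del [Hdel Hd]].
  exists (mkposreal _ (Rmin_pos _ _ Hdel Hx)); simpl; intros h Hh Hha.
  pose proof (Rmin_l del x); pose proof (Rmin_r del x).
  apply Hd; [exact Hh | lra |]; unfold Rabs in Hha; destruct Rcase_abs in Hha; lra.
Qed.

Lemma continuity_Rmax0 f : cont_Rplus f -> continuity (fun s => f (Rmax 0 s)).
Proof.
  intros H t eps Heps.
  destruct (H (Rmax 0 t) (Rmax_l 0 t) eps Heps) as [del [Hd Hs]].
  exists del; split; [exact Hd|]; intros s [_ Hst]; apply Hs; [apply Rmax_l|].
  simpl in Hst; unfold R_dist in Hst; eapply Rle_lt_trans; [|exact Hst].
  unfold Rmax; destruct (Rle_dec 0 s), (Rle_dec 0 t); unfold Rabs; repeat destruct Rcase_abs; lra.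
Qed.

Lemma cont_Rplus_continuity f g :
  continuity f -> (forall t, 0 <= t -> f t = g t) -> cont_Rplus g.
Proof.
  intros H E t Ht eps Heps; destruct (H t eps Heps) as [del [Hd Hs]].
  exists del; split; [exact Hd|]; intros s Hs0 Hst; rewrite <- !E by lra.
  destruct (Req_dec s t) as [->|Hne]; [rewrite Rminus_diag, Rabs_R0; exact Heps|].
  apply Hs; repeat split; auto.
Qed.

Lemma deriv_Rplus_eq f g f' g' : deriv_Rplus f f' -> deriv_Rplus g g' ->
  (forall t, 0 <= t -> f' t = g' t) -> f 0 = g 0 -> forall t, 0 <= t -> f t = g t.
Proof.
  intros Hf Hg E E0 t Ht.
  destruct (Rle_lt_or_eq_dec _ _ Ht) as [Ht'| <-]; [|exact E0].
  set (phi := fun s => f (Rmax 0 s) - g (Rmax 0 s)).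
  destruct (MVT_gen phi 0 t (fun _ => 0)) as [c [_ Hc]].
  - rewrite Rmin_left, Rmax_right by lra; intros x Hx.
    apply is_derive_ext_loc with (fun s => f s - g s).
    { exists (mkposreal _ (proj1 Hx)); intros s Hs; simpl in Hs.
      unfold ball in Hs; simpl in Hs; unfold AbsRing_ball, abs, minus, plus, opp in Hs; simpl in Hs.
      unfold phi; rewrite Rmax_right; [reflexivity|].
      unfold Rabs in Hs; destruct Rcase_abs in Hs; lra. }
    replace 0 with (f' x - g' x) by (rewrite E by lra; ring).
    apply (is_derive_minus f g); apply deriv_Rplus_is_derive; auto; lra.
  - intros x _; apply continuity_pt_minus;
      apply continuity_Rmax0; eapply deriv_Rplus_cont_Rplus; eauto.
  - unfold phi in Hc; rewrite Rmax_right, Rmax_left in Hc by lra; lra.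
Qed.

(* Functions on R_+ are extended to R so that Coquelicot's Leibniz rule applies: continuous ones
   as [f (Rmax 0 t)], differentiable ones affinely to the left of 0. *)
Definition extend1 (f f' : R -> R) (t : R) : R := f (Rmax 0 t) + Rmin 0 t * f' 0.

Lemma extend1_nonneg f f' t : 0 <= t -> extend1 f f' t = f t.
Proof. intros Ht; unfold extend1; rewrite Rmax_right, Rmin_left by lra; ring. Qed.

Lemma is_derive_extend1 f f' :
  deriv_Rplus f f' -> forall t, is_derive (extend1 f f') t (f' (Rmax 0 t)).
Proof.
  intros Hf t; destruct (Rlt_le_dec 0 t) as [Ht|Ht].
  - rewrite Rmax_right by lra; apply is_derive_ext_loc with f.
    + exists (mkposreal _ Ht); intros s Hs; simpl in Hs.
      unfold ball in Hs; simpl in Hs; unfold AbsRing_ball, abs, minus, plus, opp in Hs; simpl in Hs.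
      rewrite extend1_nonneg; [reflexivity|]; unfold Rabs in Hs; destruct Rcase_abs in Hs; lra.
    + apply deriv_Rplus_is_derive; auto.
  - apply is_derive_Reals; intros eps Heps; unfold extend1.
    destruct (Rle_lt_or_eq_dec _ _ Ht) as [Hn| ->].
    + exists (mkposreal _ (Ropp_0_gt_lt_contravar _ Hn)); simpl; intros h Hh Hha.
      assert (t + h < 0) by (unfold Rabs in Hha; destruct Rcase_abs in Hha; lra).
      rewrite !Rmax_left, !Rmin_right by lra.
      replace ((f 0 + (t + h) * f' 0 - (f 0 + t * f' 0)) / h - f' 0) with 0 by (field; auto).
      rewrite Rabs_R0; exact Heps.
    + destruct (Hf 0 (Rle_refl 0) eps Heps) as [del [Hdel Hd]].
      exists (mkposreal _ Hdel); simpl; intros h Hh Hha.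
      rewrite (Rmax_left 0 0), (Rmin_left 0 0), Rplus_0_l by lra.
      destruct (Rlt_le_dec 0 h) as [Hp|Hm].
      * rewrite Rmax_right, Rmin_left by lra.
        replace (f h + 0 * f' 0 - (f 0 + 0 * f' 0)) with (f (0 + h) - f 0) by (rewrite Rplus_0_l; ring).
        apply Hd; auto; lra.
      * rewrite Rmax_left, Rmin_right by lra.
        replace ((f 0 + h * f' 0 - (f 0 + 0 * f' 0)) / h - f' 0) with 0 by (field; auto).
        rewrite Rabs_R0; exact Heps.
Qed.

Lemma Defs_RInt_eq f a b : ex_RInt f a b -> Defs.RInt f a b = RInt f a b.
Proof.
  intros H; unfold Defs.RInt.
  set (P := fun v => exists pr : Riemann_integrable f a b, RiemannInt pr = v).
  destruct (epsilon_spec (inhabits 0) P) as [pr <-].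
  { exists (RiemannInt (ex_RInt_Reals_0 f a b H)), (ex_RInt_Reals_0 f a b H); reflexivity. }
  symmetry; apply RInt_Reals.
Qed.

Lemma continuity_pt_is_derive f x l : is_derive f x l -> continuity_pt f x.
Proof. intros H; apply continuity_pt_filterlim, (ex_derive_continuous f x); exists l; exact H. Qed.

Lemma continuity_pt_cst c t : continuity_pt (fun _ => c) t.
Proof. apply continuity_pt_const; intros ? ?; reflexivity. Qed.

Lemma continuity_Rabs f : continuity f -> continuity (fun s => Rabs (f s)).
Proof. intros Hf s; apply (continuity_pt_comp f Rabs); [apply Hf | apply Rcontinuity_abs]. Qed.

Lemma continuity_pt_shift K x t :
  continuity_pt K (x - t) -> continuity_pt (fun s => K (x - s)) t.
Proof.
  intros H; apply (continuity_pt_comp (fun s => x - s) K t); [|exact H].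
  apply continuity_pt_minus; [apply continuity_pt_cst | apply continuity_pt_id].
Qed.

Lemma continuity_ex_RInt f a b : continuity f -> ex_RInt f a b.
Proof.
  intros H; apply (ex_RInt_continuous (V := R_CompleteNormedModule)).
  intros z _; apply continuity_pt_filterlim, H.
Qed.

Lemma continuity_bounded f a b : continuity f -> a <= b ->
  exists M, 0 <= M /\ forall t, a <= t <= b -> Rabs (f t) <= M.
Proof.
  intros Hf Hab.
  destruct (continuity_ab_maj (fun t => Rabs (f t)) a b Hab) as [m [Hm _]].
  { intros c _; apply continuity_Rabs, Hf. }
  exists (Rabs (f m)); split; [apply Rabs_pos | exact Hm].
Qed.

Definition conv (f K : R -> R) (x : R) : R := RInt (fun s => f s * K (x - s)) 0 x.

Section Convolution.

Variables (f K : R -> R).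
Hypotheses (Hf : continuity f) (HK : continuity K).

Lemma continuity_conv_integrand x : continuity (fun s => f s * K (x - s)).
Proof. intros t; apply continuity_pt_mult; [apply Hf | apply continuity_pt_shift, HK]. Qed.

Lemma ex_RInt_conv x a b : ex_RInt (fun s => f s * K (x - s)) a b.
Proof. apply continuity_ex_RInt, continuity_conv_integrand. Qed.

Lemma conv_0 : conv f K 0 = 0.
Proof. exact (RInt_point (V := R_CompleteNormedModule) 0 _). Qed.

Lemma abs_conv_le M t : 0 <= t -> (forall s, 0 <= s <= t -> Rabs (K s) <= M) ->
  Rabs (conv f K t) <= M * RInt (fun s => Rabs (f s)) 0 t.
Proof.
  intros Ht HM; unfold conv.
  assert (Habs : continuity (fun s => Rabs (f s))) by (apply continuity_Rabs, Hf).
  eapply Rle_trans; [apply abs_RInt_le; [exact Ht | apply ex_RInt_conv]|].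
  rewrite <- (RInt_scal (V := R_CompleteNormedModule)) by (apply continuity_ex_RInt, Habs).
  apply RInt_le; [exact Ht | | |].
  - apply continuity_ex_RInt, continuity_Rabs, continuity_conv_integrand.
  - apply continuity_ex_RInt; intros s; apply continuity_pt_mult;
      [apply continuity_pt_cst | apply Habs].
  - intros s Hs; unfold scal; simpl; unfold mult; simpl; rewrite Rabs_mult, (Rmult_comm M).
    apply Rmult_le_compat_l; [apply Rabs_pos | apply HM; lra].
Qed.

Lemma abs_conv_le_const M e t : 0 <= t ->
  (forall s, 0 <= s <= t -> Rabs (K s) <= M) -> (forall s, 0 <= s <= t -> Rabs (f s) <= e) ->
  Rabs (conv f K t) <= t * (e * M).
Proof.
  intros Ht HM He; unfold conv; replace t with (t - 0) at 2 by ring.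
  apply abs_RInt_le_const; [exact Ht | apply ex_RInt_conv |].
  intros s Hs; rewrite Rabs_mult.
  apply Rmult_le_compat; [apply Rabs_pos | apply Rabs_pos | apply He | apply HM]; lra.
Qed.

End Convolution.

Lemma conv_minus f g K t : continuity f -> continuity g -> continuity K ->
  conv f K t - conv g K t = conv (fun s => f s - g s) K t.
Proof.
  intros Hf Hg HK; change (minus (conv f K t) (conv g K t) = conv (fun s => f s - g s) K t).
  unfold conv.
  rewrite <- (RInt_minus (V := R_CompleteNormedModule)) by (apply ex_RInt_conv; auto).
  apply RInt_ext; intros x _; unfold minus, plus, opp; simpl; ring.
Qed.

Lemma is_derive_conv_integrand (th K K' : R -> R) t u : is_derive K (u - t) (K' (u - t)) ->
  is_derive (fun z => th t * K (z - t)) u (th t * K' (u - t)).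
Proof.
  intros H; apply is_derive_scal.
  pose proof (is_derive_comp K (fun z => z - t) u _ 1 H) as Hc.
  rewrite <- (Rmult_1_l (K' (u - t))); apply Hc.
  auto_derive; [exact I | ring].
Qed.

Lemma is_derive_conv th K K' : continuity th -> (forall t, is_derive K t (K' t)) -> continuity K' ->
  forall x, is_derive (conv th K) x (conv th K' x + th x * K 0).
Proof.
  intros Hth HK HK' x.
  assert (HKc : continuity K) by (intros t; apply (continuity_pt_is_derive _ _ _ (HK t))).
  assert (HDer : forall u t, Derive (fun z => th t * K (z - t)) u = th t * K' (u - t)).
  { intros u t; apply is_derive_unique, is_derive_conv_integrand, HK. }
  assert (Hc2 : forall u v, continuity_2d_pt (fun u v => Derive (fun z => th v * K (z - v)) u) u v).
  { intros u v; apply continuity_2d_pt_ext with (f := fun u v => th v * K' (u - v)).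
    { intros; rewrite HDer; reflexivity. }
    apply continuity_2d_pt_mult.
    - apply continuity_1d_2d_pt_comp with (g := fun _ v => v); [apply Hth | apply continuity_2d_pt_id2].
    - apply continuity_1d_2d_pt_comp with (g := fun u v => u - v); [apply HK'|].
      apply continuity_2d_pt_minus; [apply continuity_2d_pt_id1 | apply continuity_2d_pt_id2]. }
  assert (Hl2 : forall x0 y0, locally_2d
      (fun u v => continuity_2d_pt (fun u v => Derive (fun z => th v * K (z - v)) u) u v) x0 y0).
  { intros x0 y0; exists (mkposreal 1 Rlt_0_1); intros; apply Hc2. }
  replace (conv th K' x + th x * K 0) with
    (RInt (fun t => Derive (fun u => th t * K (u - t)) x) 0 x
      + - (th 0 * K (x - 0)) * 0 + th x * K (x - x) * 1).
  2: { unfold conv; rewrite (RInt_ext _ (fun s => th s * K' (x - s))) by (intros; apply HDer).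
       rewrite Rminus_diag; ring. }
  apply (is_derive_RInt_param_bound_comp (fun u t => th t * K (u - t)) (fun _ => 0) (fun z => z) x 0 1).
  - apply filter_forall; intros; apply ex_RInt_conv; auto.
  - exists (mkposreal 1 Rlt_0_1); apply filter_forall; intros; apply ex_RInt_conv; auto.
  - exists (mkposreal 1 Rlt_0_1); apply filter_forall; intros; apply ex_RInt_conv; auto.
  - exact (is_derive_const 0 x).
  - exact (is_derive_id x).
  - exists (mkposreal 1 Rlt_0_1); apply filter_forall; intros y0 t _.
    exists (th t * K' (y0 - t)); apply is_derive_conv_integrand, HK.
  - intros t _; apply Hc2.
  - apply Hl2.
  - apply Hl2.
  - apply continuity_conv_integrand; auto.
  - apply continuity_conv_integrand; auto.
Qed.

Lemma continuity_conv th K K' : continuity th -> (forall t, is_derive K t (K' t)) -> continuity K' ->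
  continuity (conv th K).
Proof. intros Hth HK HK' t; eapply continuity_pt_is_derive, is_derive_conv; eauto. Qed.

Definition exp_term (x : R) (n : nat) : R := / INR (Factorial.fact n) * x ^ n.

Lemma exp_term_cauchy x eps : 0 < eps -> exists N, forall n m, (N <= n)%nat -> (n <= m)%nat ->
  rsum m (exp_term x) - rsum n (exp_term x) < eps.
Proof.
  intros Heps.
  assert (Hrsum : forall n, rsum (S n) (exp_term x) = sum_f_R0 (exp_term x) n).
  { induction n as [|n IH]; [simpl; ring|]; change (rsum (S (S n)) (exp_term x))
      with (rsum (S n) (exp_term x) + exp_term x (S n)); rewrite IH; reflexivity. }
  assert (Hin : exp_in x (exp x)) by (unfold exp; destruct (exist_exp x); auto).
  destruct (Hin (eps / 2) ltac:(lra)) as [N HN]; exists (S N); intros n m Hn Hm.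
  destruct n as [|n]; [lia|]; destruct m as [|m]; [lia|].
  rewrite !Hrsum; pose proof (HN n ltac:(lia)); pose proof (HN m ltac:(lia)).
  unfold Rdist, exp_term in *; unfold Rabs in *; repeat destruct Rcase_abs; lra.
Qed.

Lemma continuity_pow n : continuity (fun s => s ^ n).
Proof.
  intros s; apply continuity_pt_is_derive with (INR n * 1 * s ^ pred n).
  apply (is_derive_pow (fun s => s) n s 1 (is_derive_id s)).
Qed.

Lemma RInt_pow n t : RInt (fun s => s ^ n) 0 t = t ^ S n / INR (S n).
Proof.
  assert (HN : INR (S n) <> 0) by (apply not_0_INR; lia).
  apply is_RInt_unique.
  replace (t ^ S n / INR (S n)) with
    (minus (/ INR (S n) * t ^ S n) (/ INR (S n) * 0 ^ S n))
    by (unfold minus, plus, opp; simpl; field; auto).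
  apply (is_RInt_derive (V := R_CompleteNormedModule) (fun s => / INR (S n) * s ^ S n)).
  - intros s _; replace (s ^ n) with (/ INR (S n) * (INR (S n) * 1 * s ^ n)) by (field; auto).
    apply is_derive_scal, (is_derive_pow (fun s => s) (S n) s 1 (is_derive_id s)).
  - intros s _; apply continuity_pt_filterlim, continuity_pow.
Qed.

Lemma iterated_integral_bound (u : nat -> R -> R) T A L :
  (forall n, continuity (u n)) -> 0 <= L ->
  (forall t, 0 <= t <= T -> Rabs (u O t) <= A) ->
  (forall n t, 0 <= t <= T -> Rabs (u (S n) t) <= L * RInt (fun s => Rabs (u n s)) 0 t) ->
  forall n t, 0 <= t <= T -> Rabs (u n t) <= A * exp_term (L * t) n.
Proof.
  intros Hc HL H0 HS n; induction n as [|n IH]; intros t Ht.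
  { unfold exp_term; simpl; rewrite Rinv_1, !Rmult_1_r; auto. }
  eapply Rle_trans; [apply HS, Ht|].
  set (C := A * / INR (Factorial.fact n) * L ^ n).
  assert (Hle : RInt (fun s => Rabs (u n s)) 0 t <= RInt (fun s => C * s ^ n) 0 t).
  { apply RInt_le; [lra | | |].
    - apply continuity_ex_RInt, continuity_Rabs, Hc.
    - apply continuity_ex_RInt; intros s; apply continuity_pt_mult;
        [apply continuity_pt_cst | apply continuity_pow].
    - intros s Hs; eapply Rle_trans; [apply IH; lra|].
      unfold C, exp_term; rewrite Rpow_mult_distr; right; ring. }
  replace (RInt (fun s => C * s ^ n) 0 t) with (C * (t ^ S n / INR (S n))) in Hle.
  2: { rewrite <- RInt_pow; symmetry.
       apply (RInt_scal (V := R_CompleteNormedModule) (fun s => s ^ n)).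
       apply continuity_ex_RInt, continuity_pow. }
  eapply Rle_trans; [apply Rmult_le_compat_l; [exact HL | exact Hle]|].
  unfold C, exp_term; rewrite fact_simpl, mult_INR, Rpow_mult_distr, <- (tech_pow_Rmult L n).
  right; field; split; [apply INR_fact_neq_0 | apply not_0_INR; lia].
Qed.

Lemma Rmult_div_succ_le A eps : 0 <= A -> 0 < eps -> A * (eps / (A + 1)) <= eps.
Proof.
  intros HA Heps; apply Rmult_le_reg_r with (A + 1); [lra|]; unfold Rdiv.
  replace (A * (eps * / (A + 1)) * (A + 1)) with (A * eps) by (field; lra); nra.
Qed.

Lemma gronwall_eq0 u T L : continuity u -> 0 <= L ->
  (forall t, 0 <= t <= T -> Rabs (u t) <= L * RInt (fun s => Rabs (u s)) 0 t) ->
  forall t, 0 <= t <= T -> u t = 0.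
Proof.
  intros Hu HL H t Ht.
  destruct (continuity_bounded u 0 T Hu ltac:(lra)) as [A [HA HAb]].
  pose proof (iterated_integral_bound (fun _ => u) T A L (fun _ => Hu) HL HAb (fun _ => H)) as HB.
  apply Rabs_eq_0, Rle_antisym; [|apply Rabs_pos]; apply le_epsilon; intros eps Heps.
  destruct (cv_speed_pow_fact (L * t) (eps / (A + 1)) ltac:(apply Rdiv_lt_0_compat; lra)) as [N HN].
  specialize (HN N (le_n N)); specialize (HB N t Ht).
  unfold Rdist in HN; rewrite Rminus_0_r in HN.
  assert (Hx : exp_term (L * t) N < eps / (A + 1)).
  { unfold exp_term; rewrite Rmult_comm; eapply Rle_lt_trans; [apply Rle_abs | exact HN]. }
  assert (A * exp_term (L * t) N <= A * (eps / (A + 1))) by (apply Rmult_le_compat_l; lra).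
  pose proof (Rmult_div_succ_le A eps HA Heps); lra.
Qed.

Lemma second_kind_homogeneous_eq0 u K c : continuity u -> continuity K ->
  (forall t, 0 <= t -> u t = c * conv u K t) -> forall t, 0 <= t -> u t = 0.
Proof.
  intros Hu HK Heq t Ht.
  destruct (continuity_bounded K 0 t HK Ht) as [M [HM HMb]].
  apply (gronwall_eq0 u t (Rabs c * M) Hu); [apply Rmult_le_pos; [apply Rabs_pos | exact HM] | | lra].
  intros s Hs; rewrite Heq, Rabs_mult, Rmult_assoc by lra.
  apply Rmult_le_compat_l; [apply Rabs_pos|].
  apply abs_conv_le; [exact Hu | exact HK | lra | intros; apply HMb; lra].
Qed.

Section Picard.

Variables (g K K' : R -> R) (c : R).
Hypotheses (Hg : continuity g) (HK : forall t, is_derive K t (K' t)) (HK' : continuity K').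

Fixpoint picard (n : nat) : R -> R :=
  match n with
  | O => g
  | S m => fun t => g t + c * conv (picard m) K t
  end.

Let HKc : continuity K.
Proof. intros t; exact (continuity_pt_is_derive _ _ _ (HK t)). Qed.

Lemma continuity_picard n : continuity (picard n).
Proof.
  induction n as [|n IH]; [exact Hg|]; intros t; apply continuity_pt_plus; [apply Hg|].
  apply continuity_pt_mult; [apply continuity_pt_cst|].
  apply (continuity_conv _ K K'); auto.
Qed.

Lemma picard_step_bound T : 0 <= T -> exists A L, 0 <= A /\ 0 <= L /\
  forall n t, 0 <= t <= T -> Rabs (picard (S n) t - picard n t) <= A * exp_term (L * T) n.
Proof.
  intros HT.
  destruct (continuity_bounded K 0 T HKc HT) as [M [HM HMb]].
  set (u := fun n t => picard (S n) t - picard n t).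
  assert (Hu : forall n, continuity (u n)).
  { intros n t; apply continuity_pt_minus; apply continuity_picard. }
  destruct (continuity_bounded (u O) 0 T (Hu O) HT) as [A [HA HAb]].
  assert (HL : 0 <= Rabs c * M) by (apply Rmult_le_pos; [apply Rabs_pos | exact HM]).
  exists A, (Rabs c * M); split; [exact HA|]; split; [exact HL|].
  assert (HS : forall m s, 0 <= s <= T ->
      Rabs (u (S m) s) <= Rabs c * M * RInt (fun s0 => Rabs (u m s0)) 0 s).
  { intros m s Hs; unfold u.
    replace (picard (S (S m)) s - picard (S m) s)
      with (c * (conv (picard (S m)) K s - conv (picard m) K s)) by (simpl; ring).
    rewrite conv_minus, Rabs_mult, Rmult_assoc by (apply continuity_picard || exact HKc).
    apply Rmult_le_compat_l; [apply Rabs_pos|].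
    apply abs_conv_le; [apply Hu | exact HKc | lra | intros; apply HMb; lra]. }
  intros n t Ht; eapply Rle_trans; [apply (iterated_integral_bound u T A _ Hu HL HAb HS n t Ht)|].
  apply Rmult_le_compat_l; [exact HA|]; apply Rmult_le_compat_l;
    [apply Rlt_le, Rinv_0_lt_compat, INR_fact_lt_0|].
  apply pow_incr; split; [apply Rmult_le_pos|apply Rmult_le_compat_l]; lra.
Qed.

Lemma picard_uniform_cauchy T eps : 0 <= T -> 0 < eps -> exists N, forall n m,
  (N <= n)%nat -> (n <= m)%nat -> forall t, 0 <= t <= T -> Rabs (picard m t - picard n t) <= eps.
Proof.
  intros HT Heps; destruct (picard_step_bound T HT) as [A [L [HA [HL Hstep]]]].
  assert (Htele : forall n k t, 0 <= t <= T -> Rabs (picard (n + k) t - picard n t)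
      <= A * (rsum (n + k) (exp_term (L * T)) - rsum n (exp_term (L * T)))).
  { intros n k t Ht; induction k as [|k IH].
    - rewrite Nat.add_0_r, !Rminus_diag, Rabs_R0; lra.
    - rewrite Nat.add_succ_r; simpl rsum.
      replace (picard (S (n + k)) t - picard n t) with
        ((picard (S (n + k)) t - picard (n + k) t) + (picard (n + k) t - picard n t)) by ring.
      eapply Rle_trans; [apply Rabs_triang|]; pose proof (Hstep (n + k)%nat t Ht); lra. }
  destruct (exp_term_cauchy (L * T) (eps / (A + 1)) ltac:(apply Rdiv_lt_0_compat; lra)) as [N HN].
  exists N; intros n m Hn Hm t Ht; replace m with (n + (m - n))%nat by lia.
  eapply Rle_trans; [apply Htele, Ht|]; specialize (HN n (n + (m - n))%nat Hn ltac:(lia)).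
  apply Rle_trans with (A * (eps / (A + 1))); [apply Rmult_le_compat_l; lra|].
  apply Rmult_div_succ_le; assumption.
Qed.

Definition picard_limit (t : R) : R := real (Lim_seq (fun n => picard n t)).

Lemma is_lim_seq_picard t : 0 <= t -> is_lim_seq (fun n => picard n t) (picard_limit t).
Proof.
  intros Ht; apply Lim_seq_correct', ex_lim_seq_cauchy_corr; intros [eps Heps]; simpl.
  destruct (picard_uniform_cauchy t (eps / 2) Ht ltac:(lra)) as [N HN]; exists N; intros n m Hn Hm.
  destruct (Nat.le_ge_cases n m) as [Hnm|Hnm].
  - rewrite <- Rabs_Ropp, Ropp_minus_distr; specialize (HN n m Hn Hnm t ltac:(lra)); lra.
  - specialize (HN m n Hm Hnm t ltac:(lra)); lra.
Qed.

Lemma picard_uniform_limit T eps : 0 <= T -> 0 < eps -> exists N, forall n, (N <= n)%nat ->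
  forall t, 0 <= t <= T -> Rabs (picard_limit t - picard n t) <= eps.
Proof.
  intros HT Heps; destruct (picard_uniform_cauchy T eps HT Heps) as [N HN]; exists N.
  intros n Hn t Ht; apply le_epsilon; intros e He.
  destruct (proj1 (is_lim_seq_Reals _ _) (is_lim_seq_picard t ltac:(lra)) e He) as [N' HN'].
  specialize (HN' (Nat.max n N') (Nat.le_max_r _ _)); unfold Rdist in HN'.
  specialize (HN n (Nat.max n N') Hn (Nat.le_max_l _ _) t Ht).
  replace (picard_limit t - picard n t) with
    (- (picard (Nat.max n N') t - picard_limit t) + (picard (Nat.max n N') t - picard n t)) by ring.
  eapply Rle_trans; [apply Rabs_triang|]; rewrite Rabs_Ropp; lra.
Qed.

Lemma cont_Rplus_picard_limit : cont_Rplus picard_limit.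
Proof.
  intros t0 Ht0 eps Heps.
  destruct (picard_uniform_limit (t0 + 1) (eps / 3) ltac:(lra) ltac:(lra)) as [N HN].
  destruct (continuity_picard N t0 (eps / 3) ltac:(lra)) as [del [Hdel Hc]].
  exists (Rmin del 1); split; [apply Rmin_pos; lra|]; intros s Hs Hst.
  pose proof (Rmin_l del 1); pose proof (Rmin_r del 1).
  assert (s <= t0 + 1) by (unfold Rabs in Hst; destruct Rcase_abs in Hst; lra).
  pose proof (HN N (le_n N) s ltac:(lra)); pose proof (HN N (le_n N) t0 ltac:(lra)).
  assert (Rabs (picard N s - picard N t0) < eps / 3).
  { destruct (Req_dec s t0) as [->|Hne]; [rewrite Rminus_diag, Rabs_R0; lra|].
    apply Hc; repeat split; auto; simpl; unfold R_dist; lra. }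
  replace (picard_limit s - picard_limit t0) with ((picard_limit s - picard N s)
    + (picard N s - picard N t0) - (picard_limit t0 - picard N t0)) by ring.
  unfold Rminus at 1; eapply Rle_lt_trans; [apply Rabs_triang|]; rewrite Rabs_Ropp.
  eapply Rle_lt_trans; [apply Rplus_le_compat_r, Rabs_triang|]; lra.
Qed.

Lemma picard_limit_fixed t : 0 <= t ->
  picard_limit t = g t + c * conv (fun s => picard_limit (Rmax 0 s)) K t.
Proof.
  intros Ht; destruct (continuity_bounded K 0 t HKc Ht) as [M [HM HMb]].
  set (C := 1 + Rabs c * (t * M)).
  assert (HC : 0 < C).
  { pose proof (Rmult_le_pos _ _ (Rabs_pos c) (Rmult_le_pos _ _ Ht HM)); unfold C; lra. }
  assert (Hlim : continuity (fun s => picard_limit (Rmax 0 s)))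
    by (apply continuity_Rmax0, cont_Rplus_picard_limit).
  apply Rminus_diag_uniq, Rabs_eq_0, Rle_antisym; [|apply Rabs_pos]; apply le_epsilon; intros eps Heps.
  destruct (picard_uniform_limit t (eps / C) Ht ltac:(apply Rdiv_lt_0_compat; lra)) as [N HN].
  pose proof (HN (S N) (le_S _ _ (le_n N)) t ltac:(lra)) as H1; simpl picard in H1.
  assert (H2 : Rabs (conv (fun s => picard_limit (Rmax 0 s)) K t - conv (picard N) K t)
      <= t * (eps / C * M)).
  { rewrite conv_minus by (apply continuity_picard || auto).
    apply abs_conv_le_const; [ | exact HKc | exact Ht | exact HMb |].
    - intros s; apply continuity_pt_minus; [apply Hlim | apply continuity_picard].
    - intros s Hs; rewrite Rmax_right by lra; apply HN; [lia | lra]. }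
  replace (picard_limit t - (g t + c * conv (fun s => picard_limit (Rmax 0 s)) K t)) with
    ((picard_limit t - (g t + c * conv (picard N) K t))
      - c * (conv (fun s => picard_limit (Rmax 0 s)) K t - conv (picard N) K t)) by ring.
  unfold Rminus at 1; eapply Rle_trans; [apply Rabs_triang|]; rewrite Rabs_Ropp, Rabs_mult.
  assert (Rabs c * Rabs (conv (fun s => picard_limit (Rmax 0 s)) K t - conv (picard N) K t)
      <= Rabs c * (t * (eps / C * M))) by (apply Rmult_le_compat_l; [apply Rabs_pos | exact H2]).
  replace (0 + eps) with (eps / C + Rabs c * (t * (eps / C * M)))
    by (unfold C; field; apply Rgt_not_eq, HC).
  lra.
Qed.

End Picard.

Section VolterraFirstKind.

Variables (k k' k'' : R -> R).
Hypotheses (Hk : deriv_Rplus k k') (Hk' : deriv_Rplus k' k'') (Hk'' : cont_Rplus k'')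
  (Hk0 : k 0 <> 0).

Let K := extend1 k k'.
Let K' := extend1 k' k''.

Let HK : forall t, is_derive K t (k' (Rmax 0 t)).
Proof. exact (is_derive_extend1 k k' Hk). Qed.

Let HK' : forall t, is_derive K' t (k'' (Rmax 0 t)).
Proof. exact (is_derive_extend1 k' k'' Hk'). Qed.

Let HK_cont : continuity K.
Proof. intros t; exact (continuity_pt_is_derive _ _ _ (HK t)). Qed.

Let Hk'_cont : continuity (fun t => k' (Rmax 0 t)).
Proof. apply continuity_Rmax0; eapply deriv_Rplus_cont_Rplus; eauto. Qed.

Let Hk''_cont : continuity (fun t => k'' (Rmax 0 t)).
Proof. apply continuity_Rmax0, Hk''. Qed.

Let HK'_cont : continuity K'.
Proof. intros t; exact (continuity_pt_is_derive _ _ _ (HK' t)). Qed.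

Lemma volterra_eq_conv th : cont_Rplus th -> forall x, 0 <= x ->
  ex_RInt (fun s => th s * k (x - s)) 0 x /\ volterra k th x = conv (fun s => th (Rmax 0 s)) K x.
Proof.
  intros Hth x Hx.
  assert (E : forall s, Rmin 0 x < s < Rmax 0 x ->
      th (Rmax 0 s) * K (x - s) = th s * k (x - s)).
  { intros s Hs; rewrite Rmin_left, Rmax_right in Hs by lra.
    unfold K; rewrite extend1_nonneg, Rmax_right by lra; reflexivity. }
  assert (Hex : ex_RInt (fun s => th s * k (x - s)) 0 x).
  { eapply ex_RInt_ext; [exact E|]; apply ex_RInt_conv;
      [apply continuity_Rmax0, Hth | exact HK_cont]. }
  split; [exact Hex|]; unfold volterra; rewrite Defs_RInt_eq by exact Hex.
  symmetry; apply RInt_ext, E.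
Qed.

Lemma deriv_Rplus_volterra th : cont_Rplus th ->
  deriv_Rplus (volterra k th) (fun t => conv (fun s => th (Rmax 0 s)) K' t + th t * k 0).
Proof.
  intros Hth; apply deriv_Rplus_ext with (conv (fun s => th (Rmax 0 s)) K)
    (fun t => conv (fun s => th (Rmax 0 s)) (fun s => k' (Rmax 0 s)) t + th (Rmax 0 t) * K 0).
  - apply is_derive_deriv_Rplus, is_derive_conv;
      [apply continuity_Rmax0, Hth | exact HK | exact Hk'_cont].
  - intros t Ht; symmetry; apply volterra_eq_conv; auto.
  - intros t Ht; unfold K; rewrite extend1_nonneg, Rmax_right by lra; f_equal.
    unfold conv; apply RInt_ext; intros s Hs; rewrite Rmin_left, Rmax_right in Hs by lra.
    unfold K'; rewrite extend1_nonneg, (Rmax_right 0 (t - s)) by lra; reflexivity.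
Qed.

Lemma volterra_well_defined th : cont_Rplus th ->
  (forall tau, 0 <= tau -> exists pr : Riemann_integrable (fun s => th s * k (tau - s)) 0 tau, True) /\
  C1_Rplus (volterra k th) /\ volterra k th 0 = 0.
Proof.
  intros Hth; split; [|split].
  - intros tau Htau; exists (ex_RInt_Reals_0 _ _ _ (proj1 (volterra_eq_conv th Hth tau Htau))); exact I.
  - eexists; split; [apply deriv_Rplus_volterra, Hth|].
    apply cont_Rplus_continuity with (fun t => conv (fun s => th (Rmax 0 s)) K' t + th (Rmax 0 t) * k 0).
    + intros t; apply continuity_pt_plus.
      * apply (continuity_conv _ _ _ (continuity_Rmax0 th Hth) HK' Hk''_cont).
      * apply continuity_pt_mult; [apply continuity_Rmax0, Hth | apply continuity_pt_cst].
    + intros t Ht; rewrite Rmax_right by lra; reflexivity.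
  - rewrite (proj2 (volterra_eq_conv th Hth 0 (Rle_refl 0))); apply conv_0.
Qed.

Lemma volterra_eq0 th : cont_Rplus th ->
  (forall tau, 0 <= tau -> volterra k th tau = 0) -> forall s, 0 <= s -> th s = 0.
Proof.
  intros Hth H0 s Hs.
  assert (Hd : forall t, 0 <= t -> conv (fun s => th (Rmax 0 s)) K' t + th t * k 0 = 0).
  { apply (deriv_Rplus_unique _ _ _ _ (deriv_Rplus_volterra th Hth) deriv_Rplus_zero H0). }
  assert (Hsecond : forall t, 0 <= t ->
      th (Rmax 0 t) = - / k 0 * conv (fun s => th (Rmax 0 s)) K' t).
  { intros t Ht; specialize (Hd t Ht); rewrite Rmax_right by lra.
    apply Rmult_eq_reg_l with (k 0); [|exact Hk0]; field_simplify; [lra | exact Hk0]. }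
  pose proof (second_kind_homogeneous_eq0 _ K' _ (continuity_Rmax0 th Hth) HK'_cont Hsecond s Hs) as Hz.
  cbv beta in Hz; rewrite Rmax_right in Hz by lra; exact Hz.
Qed.

Lemma volterra_injective th1 th2 : cont_Rplus th1 -> cont_Rplus th2 ->
  (forall tau, 0 <= tau -> volterra k th1 tau = volterra k th2 tau) ->
  forall s, 0 <= s -> th1 s = th2 s.
Proof.
  intros H1 H2 HI s Hs.
  assert (Hdiff : cont_Rplus (fun t => th1 t - th2 t)).
  { apply cont_Rplus_continuity with (fun t => th1 (Rmax 0 t) - th2 (Rmax 0 t)).
    - intros t; apply continuity_pt_minus; apply continuity_Rmax0; assumption.
    - intros t Ht; rewrite Rmax_right by lra; reflexivity. }
  apply Rminus_diag_uniq; revert s Hs; apply volterra_eq0; [exact Hdiff|]; intros tau Htau.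
  transitivity (volterra k th1 tau - volterra k th2 tau); [|rewrite HI by exact Htau; ring].
  rewrite (proj2 (volterra_eq_conv _ Hdiff tau Htau)), (proj2 (volterra_eq_conv _ H1 tau Htau)),
    (proj2 (volterra_eq_conv _ H2 tau Htau)), conv_minus by (try apply continuity_Rmax0; assumption).
  reflexivity.
Qed.

Lemma volterra_surjective h : C1_Rplus h -> h 0 = 0 ->
  exists th, cont_Rplus th /\ forall tau, 0 <= tau -> volterra k th tau = h tau.
Proof.
  intros [h' [Hh' Hh'c]] Hh0.
  set (g := fun t => h' (Rmax 0 t) / k 0).
  assert (Hg : continuity g).
  { intros t; apply continuity_pt_mult; [apply continuity_Rmax0, Hh'c|].
    apply continuity_pt_cst. }
  set (th := picard_limit g K' (- / k 0)).
  assert (Hth : cont_Rplus th) by exact (cont_Rplus_picard_limit g K' _ _ Hg HK' Hk''_cont).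
  exists th; split; [exact Hth|].
  apply deriv_Rplus_eq with (1 := deriv_Rplus_volterra th Hth) (2 := Hh').
  - intros t Ht; unfold th at 2; rewrite (picard_limit_fixed g K' _ _ Hg HK' Hk''_cont t Ht).
    fold th; unfold g; rewrite Rmax_right by lra; field; exact Hk0.
  - rewrite Hh0; apply volterra_well_defined, Hth.
Qed.

End VolterraFirstKind.

Theorem mainTheorem5
  (d : nat) (Hd : (1 <= d)%nat)
  (Y : Type)
  (a : Y -> nat -> nat -> R) (b : Y -> nat -> R)
  (alpha : Y -> nat -> nat -> nat -> R) (beta : Y -> nat -> nat -> R)
  (Ha : forall y, symmetric_psd d (a y))
  (Halpha : forall y i, (i < d)%nat -> symmetric_psd d (alpha y i))
  (lam : nat -> R) (Hlam : dot d lam e1 <> 0)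
  (y : Y)
  (Phi : R -> R) (Psi : R -> nat -> R) (dPhi : R -> R) (dPsi : R -> nat -> R)
  (HPhi_smooth : Cinf_Rplus Phi)
  (HPsi_smooth : forall i, (i < d)%nat -> Cinf_Rplus (fun t => Psi t i))
  (HdPhi : deriv_Rplus Phi dPhi)
  (HdPsi : forall i, (i < d)%nat -> deriv_Rplus (fun t => Psi t i) (fun t => dPsi t i))
  (HPhi0 : Phi 0 = 0)
  (HPsi0 : forall i, (i < d)%nat -> Psi 0 i = 0)
  (HPhi_ode : forall t, 0 <= t -> dPhi t = quadf d (a y) (b y) (Psi t))
  (HPsi_ode : forall t i, 0 <= t -> (i < d)%nat ->
       dPsi t i = quadf d (alpha y i) (beta y i) (Psi t) - lam i) :
  let I := volterra (fun t => dot d (dPsi t) e1) in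
  (forall theta : R -> R, cont_Rplus theta ->
     (forall tau, 0 <= tau ->
        exists pr : Riemann_integrable
          (fun s => theta s * dot d (dPsi (tau - s)) e1) 0 tau, True) /\
     C1_Rplus (I theta) /\ I theta 0 = 0) /\
  (forall theta1 theta2 : R -> R, cont_Rplus theta1 -> cont_Rplus theta2 ->
     (forall tau, 0 <= tau -> I theta1 tau = I theta2 tau) ->
     forall s, 0 <= s -> theta1 s = theta2 s) /\
  (forall h : R -> R, C1_Rplus h -> h 0 = 0 ->
     exists theta : R -> R, cont_Rplus theta /\
       forall tau, 0 <= tau -> I theta tau = h tau).
Proof.
  intros I; set (k := fun t => dot d (dPsi t) e1).
  destruct (HPsi_smooth O ltac:(lia)) as [D [HD0 HD]].
  assert (Hk : forall t, 0 <= t -> D 1%nat t = k t).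
  { intros t Ht; unfold k; rewrite dot_e1 by exact Hd.
    apply (deriv_Rplus_unique (D O) _ (fun t => Psi t O) _ (HD O) (HdPsi O ltac:(lia)) HD0 t Ht). }
  assert (Hk0 : k 0 <> 0).
  { unfold k; rewrite dot_e1, HPsi_ode, quadf_eq0 by (auto; lra || lia).
    rewrite dot_e1 in Hlam by exact Hd; lra. }
  pose proof (deriv_Rplus_ext _ _ k _ (HD 1%nat) Hk (fun _ _ => eq_refl)) as Hk'.
  pose proof (deriv_Rplus_cont_Rplus _ _ (HD 3%nat)) as Hk''.
  split; [|split].
  - exact (volterra_well_defined k _ _ Hk' (HD 2%nat) Hk'').
  - exact (volterra_injective k _ _ Hk' (HD 2%nat) Hk0).
  - exact (volterra_surjective k _ _ Hk' (HD 2%nat) Hk'' Hk0).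
Qed.
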